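(* Let $V:\mathbb R\to\mathbb R$ be smooth and $\alpha_{11},\alpha_{13},\alpha_{33},\beta\in\mathbb R$. Let $u_h,v_h,w_h$ be continuously differentiable in $t$ with values in $V_h$ and satisfy, for every $j$ and all $\varphi_1,\varphi_2,\varphi_3\in V_h$, $$-\int_{I_j}\partial_tv_h\varphi_1dx-\int_{I_j}w_h\partial_x\varphi_1dx+(\widehat{w_h}\varphi_1^-)_{j+\frac12}-(\widehat{w_h}\varphi_1^+)_{j-\frac12}=-\int_{I_j}V'(u_h)\varphi_1dx,$$ $$\int_{I_j}\partial_tu_h\varphi_2dx+(\widehat{v_h}\varphi_2^-)_{j+\frac12}-(\widehat{v_h}\varphi_2^+)_{j-\frac12}=\int_{I_j}v_h\varphi_2dx,$$ $$\int_{I_j}u_h\partial_x\varphi_3dx-(\widehat{u_h}\varphi_3^-)_{j+\frac12}+(\widehat{u_h}\varphi_3^+)_{j-\frac12}=-\int_{I_j}w_h\varphi_3dx,$$ with interface fluxes $\widehat{w_h}=\{w_h\}+\alpha_{11}[u_h]+\alpha_{13}[w_h]-\beta\,\partial_t[v_h]$, $\widehat{v_h}=\beta\,\partial_t[u_h]$, $\widehat{u_h}=\{u_h\}-\alpha_{13}[u_h]-\alpha_{33}[w_h]$. Then the discrete energy $$\mathcal E_h=\int_\Omega\Big(\tfrac12(v_h^2+w_h^2)-V(u_h)\Big)dx+\tfrac12\sum_j\big(\alpha_{11}[u_h]^2-\alpha_{33}[w_h]^2\big)_{j+\frac12}$$ is constant in time.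
   Context: This is a DG discretization of the Hamiltonian wave equation $u_{tt}-u_{xx}=V'(u)$, written as $-v_t+w_x=-V'(u)$, $u_t=v$, $-u_x=-w$. Mesh and spaces: a one-dimensional domain $\Omega$ is partitioned into cells $I_j=[x_{j-1/2},x_{j+1/2}]$, $j=1,\dots,N$, with periodic boundary conditions (interface indices modulo $N$). For fixed $k\ge0$, $V_h=\{v\in L^2(\Omega): v|_{I_j}\text{ is a polynomial of degree}\le k\ \forall j\}$. For $v\in V_h$, $v^\pm_{j+1/2}$ are its right/left limits at $x_{j+1/2}$, $\{v\}=\frac12(v^++v^-)$, $[v]=v^+-v^-$; subscript $j\pm\frac12$ denotes evaluation at $x_{j\pm1/2}$. *)

From Stdlib Require Import Reals Lra Lia Arith.
From Coquelicot Require Import Coquelicot.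
Open Scope R_scope.

(* Mesh: nodes xs 0 < xs 1 < ... < xs N; cell j (0 <= j < N) is
   I_j = [xs j, xs (j+1)], i.e. x_{j-1/2} = xs j and x_{j+1/2} = xs (j+1)
   (cells are indexed from 0 instead of 1).  Omega = [xs 0, xs N], periodic.
   Interface m (0 <= m < N) is the right end x_{m+1/2} of cell m; by
   periodicity interface N-1 (at xs N) is identified with xs 0. *)

(* An element of V_h is given by its coefficients: c j i is the coefficient of
   x^i of the polynomial (degree <= k) on cell j. *)
Definition dgfun := nat -> nat -> R.

Definition cell_eval (k : nat) (c : dgfun) (j : nat) (x : R) : R :=
  sum_f_R0 (fun i => c j i * x ^ i) k.

(* v^-_{m+1/2} : left limit at interface m (from cell m) *)
Definition vminus (k : nat) (xs : nat -> R) (c : dgfun) (m : nat) : R :=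
  cell_eval k c m (xs (S m)).

(* v^+_{m+1/2} : right limit at interface m (from cell m+1 mod N, at its left end) *)
Definition vplus (k N : nat) (xs : nat -> R) (c : dgfun) (m : nat) : R :=
  let s := ((S m) mod N)%nat in cell_eval k c s (xs s).

Definition avg (k N : nat) (xs : nat -> R) (c : dgfun) (m : nat) : R :=
  / 2 * (vplus k N xs c m + vminus k xs c m).

Definition jump (k N : nat) (xs : nat -> R) (c : dgfun) (m : nat) : R :=
  vplus k N xs c m - vminus k xs c m.

(* index of the interface x_{j-1/2} (left end of cell j), modulo N *)
Definition left_if (N j : nat) : nat := ((j + N - 1) mod N)%nat.

Fixpoint sumN (f : nat -> R) (n : nat) : R :=
  match n with O => 0 | S n' => sumN f n' + f n' end.

Definition w_hat (k N : nat) (xs : nat -> R) (a11 a13 b : R)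
  (u v w : R -> dgfun) (t : R) (m : nat) : R :=
  avg k N xs (w t) m + a11 * jump k N xs (u t) m + a13 * jump k N xs (w t) m
  - b * Derive (fun s => jump k N xs (v s) m) t.

Definition v_hat (k N : nat) (xs : nat -> R) (b : R)
  (u : R -> dgfun) (t : R) (m : nat) : R :=
  b * Derive (fun s => jump k N xs (u s) m) t.

Definition u_hat (k N : nat) (xs : nat -> R) (a13 a33 : R)
  (u w : R -> dgfun) (t : R) (m : nat) : R :=
  avg k N xs (u t) m - a13 * jump k N xs (u t) m - a33 * jump k N xs (w t) m.

Definition C1_Vh (k N : nat) (T0 T1 : R) (u : R -> dgfun) : Prop :=
  forall j i, (j < N)%nat -> (i <= k)%nat -> forall t, T0 < t < T1 ->
    ex_derive (fun s => u s j i) t /\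
    continuous (fun s => Derive (fun s' => u s' j i) s) t.

Definition smooth (V : R -> R) : Prop := forall n x, ex_derive_n V n x.

Definition energy (k N : nat) (xs : nat -> R) (V : R -> R) (a11 a33 : R)
  (u v w : R -> dgfun) (t : R) : R :=
  sumN (fun j => RInt (fun x =>
          / 2 * ((cell_eval k (v t) j x) ^ 2 + (cell_eval k (w t) j x) ^ 2)
          - V (cell_eval k (u t) j x)) (xs j) (xs (S j))) N
  + / 2 * sumN (fun m => a11 * (jump k N xs (u t) m) ^ 2
                         - a33 * (jump k N xs (w t) m) ^ 2) N.

From Stdlib Require Import Reals Lra Lia.
From Coquelicot Require Import Coquelicot.
Open Scope R_scope.

(* Test the first equation
   with ∂t u_h, the second with ∂t v_h, and the time derivative of the third
   (its test functions do not depend on t) with w_h; after one integration by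
   parts of w_h ∂x(∂t u_h), the volume part of dE_h/dt on each cell becomes a
   difference of boundary terms at its two ends.  On the periodic mesh these
   regroup interface by interface, and with the prescribed fluxes each interface
   contributes exactly -(α11 [u_h][∂t u_h] - α33 [w_h][∂t w_h]): the β-terms
   cancel between v̂ and ŵ, the α13-terms between û and ŵ, and the averages
   recombine into the jump [w_h ∂t u_h].  This cancels the derivative of the
   jump penalty, so dE_h/dt = 0 and E_h is constant by the mean value theorem. *)

(** * Calculus in one and two real variables *)

Lemma open_interval_ball (T0 T1 t0 : R) :
  T0 < t0 < T1 -> exists d : posreal, forall t, Rabs (t - t0) < d -> T0 < t < T1.
Proof.
  intros Ht0.
  assert (Hd : 0 < Rmin (t0 - T0) (T1 - t0)) by (apply Rmin_glb_lt; lra).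
  exists (mkposreal _ Hd); simpl; intros t Ht.
  apply Rabs_def2 in Ht.
  pose proof (Rmin_l (t0 - T0) (T1 - t0)); pose proof (Rmin_r (t0 - T0) (T1 - t0)).
  lra.
Qed.

Lemma is_derive_Rplus (f g : R -> R) (x df dg : R) :
  is_derive f x df -> is_derive g x dg -> is_derive (fun y => f y + g y) x (df + dg).
Proof. apply (is_derive_plus f g). Qed.

Lemma is_derive_Rminus (f g : R -> R) (x df dg : R) :
  is_derive f x df -> is_derive g x dg -> is_derive (fun y => f y - g y) x (df - dg).
Proof. apply (is_derive_minus f g). Qed.

Lemma is_derive_mult_const (f : R -> R) (x df c : R) :
  is_derive f x df -> is_derive (fun y => f y * c) x (df * c).
Proof. exact (@is_derive_scal_l R_AbsRing R_NormedModule f x df c). Qed.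

Lemma is_derive_continuity_pt (f : R -> R) (x l : R) :
  is_derive f x l -> continuity_pt f x.
Proof.
  intros Hf; apply continuity_pt_filterlim, (ex_derive_continuous f); now exists l.
Qed.

Lemma is_derive_vanishing (f : R -> R) (T0 T1 t0 l : R) :
  (forall t, T0 < t < T1 -> f t = 0) -> T0 < t0 < T1 -> is_derive f t0 l -> l = 0.
Proof.
  intros Hf Ht0 Hl.
  destruct (open_interval_ball _ _ _ Ht0) as [d Hd].
  rewrite <- (is_derive_unique _ _ _ Hl).
  apply is_derive_unique, is_derive_ext_loc with (fun _ => 0).
  - exists d; intros t Ht; symmetry; apply Hf, Hd, Ht.
  - apply (is_derive_const 0 t0).
Qed.

Lemma is_derive_zero_interval_const (f : R -> R) (T0 T1 t1 t2 : R) :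
  (forall t, T0 < t < T1 -> is_derive f t 0) ->
  T0 < t1 < T1 -> T0 < t2 < T1 -> f t1 = f t2.
Proof.
  intros Hf Ht1 Ht2.
  assert (Hin : forall t, Rmin t1 t2 <= t <= Rmax t1 t2 -> T0 < t < T1).
  { unfold Rmin, Rmax; intros t; destruct (Rle_dec t1 t2); lra. }
  destruct (MVT_gen f t1 t2 (fun _ => 0)) as [c [_ Hc]].
  - intros t Ht; apply Hf, Hin; lra.
  - intros t Ht; apply is_derive_continuity_pt with 0; apply Hf, Hin, Ht.
  - lra.
Qed.

Lemma is_derive_sum_f_R0 (g : nat -> R -> R) (dg : nat -> R) (x : R) (n : nat) :
  (forall i, (i <= n)%nat -> is_derive (g i) x (dg i)) ->
  is_derive (fun y => sum_f_R0 (fun i => g i y) n) x (sum_f_R0 dg n).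
Proof.
  induction n as [|n IH]; intros Hg; simpl.
  - apply Hg; lia.
  - apply is_derive_Rplus.
    + apply IH; intros; apply Hg; lia.
    + apply Hg; lia.
Qed.

Lemma is_derive_energy_density (V p q r : R -> R) (dp dq dr t : R) :
  ex_derive V (r t) -> is_derive p t dp -> is_derive q t dq -> is_derive r t dr ->
  is_derive (fun s => / 2 * (p s ^ 2 + q s ^ 2) - V (r s)) t
    (p t * dp + q t * dq - Derive V (r t) * dr).
Proof.
  intros HV Hp Hq Hr.
  auto_derive.
  - repeat split; try (eexists; eassumption); assumption.
  - replace (Derive (fun x : R => p x) t) with dp by (symmetry; now apply is_derive_unique).
    replace (Derive (fun x : R => q x) t) with dq by (symmetry; now apply is_derive_unique).
    replace (Derive (fun x : R => r x) t) with dr by (symmetry; now apply is_derive_unique).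
    change (Derive (fun x : R => V x)) with (Derive V).
    field.
Qed.

Lemma is_derive_weighted_squares (a c : R) (p q : R -> R) (dp dq t : R) :
  is_derive p t dp -> is_derive q t dq ->
  is_derive (fun s => a * p s ^ 2 - c * q s ^ 2) t (2 * (a * p t * dp - c * q t * dq)).
Proof.
  intros Hp Hq.
  auto_derive.
  - split; [now exists dp | split; [now exists dq | easy]].
  - replace (Derive (fun x : R => p x) t) with dp by (symmetry; now apply is_derive_unique).
    replace (Derive (fun x : R => q x) t) with dq by (symmetry; now apply is_derive_unique).
    ring.
Qed.

Lemma continuity_2d_pt_fst (f : R -> R) (t x : R) :
  continuity_pt f t -> continuity_2d_pt (fun s _ => f s) t x.
Proof.
  intros Hf; apply (continuity_1d_2d_pt_comp f (fun s _ => s)); auto.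
  apply continuity_2d_pt_id1.
Qed.

Lemma continuity_2d_pt_snd (f : R -> R) (t x : R) :
  continuity_pt f x -> continuity_2d_pt (fun _ y => f y) t x.
Proof.
  intros Hf; apply (continuity_1d_2d_pt_comp f (fun _ y => y)); auto.
  apply continuity_2d_pt_id2.
Qed.

Lemma continuity_2d_pt_sum_f_R0 (g : nat -> R -> R -> R) (t x : R) (n : nat) :
  (forall i, (i <= n)%nat -> continuity_2d_pt (g i) t x) ->
  continuity_2d_pt (fun s y => sum_f_R0 (fun i => g i s y) n) t x.
Proof.
  induction n as [|n IH]; intros Hg; simpl.
  - apply Hg; lia.
  - apply (continuity_2d_pt_plus (fun s y => sum_f_R0 (fun i => g i s y) n) (g (S n))).
    + apply IH; intros; apply Hg; lia.
    + apply Hg; lia.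
Qed.

Lemma ex_RInt_continuity_pt (f : R -> R) (a b : R) :
  (forall x, continuity_pt f x) -> ex_RInt f a b.
Proof.
  intros Hf; apply (@ex_RInt_continuous R_CompleteNormedModule); intros x _.
  apply continuity_pt_filterlim, Hf.
Qed.

Lemma is_derive_RInt_param_interval (f df : R -> R -> R) (a b T0 T1 t0 : R) :
  T0 < t0 < T1 ->
  (forall t x, T0 < t < T1 -> is_derive (fun s => f s x) t (df t x)) ->
  (forall t x, T0 < t < T1 -> continuity_pt (f t) x) ->
  (forall x, continuity_2d_pt df t0 x) ->
  is_derive (fun t => RInt (f t) a b) t0 (RInt (df t0) a b).
Proof.
  intros Ht0 Hdf Hf Hcont.
  destruct (open_interval_ball _ _ _ Ht0) as [d Hd].
  replace (RInt (df t0) a b) with (RInt (fun x => Derive (fun s => f s x) t0) a b).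
  2:{ apply RInt_ext; intros x _; now apply is_derive_unique, Hdf. }
  apply (is_derive_RInt_param f a b t0).
  - exists d; intros t Ht x _; exists (df t x); now apply Hdf, Hd.
  - intros x _; apply continuity_2d_pt_ext_loc with df; auto.
    exists d; intros t y Ht _; symmetry; now apply is_derive_unique, Hdf, Hd.
  - exists d; intros t Ht; apply ex_RInt_continuity_pt; intros x; now apply Hf, Hd.
Qed.

Lemma RInt_by_parts (f g df dg : R -> R) (a b : R) :
  (forall x, is_derive f x (df x)) -> (forall x, is_derive g x (dg x)) ->
  (forall x, continuity_pt df x) -> (forall x, continuity_pt dg x) ->
  RInt (fun x => f x * dg x) a b + RInt (fun x => g x * df x) a b
  = f b * g b - f a * g a.
Proof.
  intros Hf Hg Hdf Hdg.
  assert (Hfc : forall x, continuity_pt f x) by (intros x; eapply is_derive_continuity_pt, Hf).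
  assert (Hgc : forall x, continuity_pt g x) by (intros x; eapply is_derive_continuity_pt, Hg).
  rewrite <- (RInt_plus (V := R_CompleteNormedModule)).
  2, 3: apply ex_RInt_continuity_pt; intros x; apply continuity_pt_mult; auto.
  apply is_RInt_unique, (is_RInt_derive (fun x => f x * g x)).
  - intros x _.
    change (is_derive (fun y => f y * g y) x (f x * dg x + g x * df x)).
    auto_derive.
    + split; [now exists (df x) | split; [now exists (dg x) | easy]].
    + replace (Derive (fun y : R => f y) x) with (df x) by (symmetry; now apply is_derive_unique).
      replace (Derive (fun y : R => g y) x) with (dg x) by (symmetry; now apply is_derive_unique).
      ring.
  - intros x _; apply continuity_pt_filterlim.
    apply continuity_pt_plus; apply continuity_pt_mult; auto.
Qed.

Lemma RInt_mult_comm (f g : R -> R) (a b : R) :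
  RInt (fun x => f x * g x) a b = RInt (fun x => g x * f x) a b.
Proof. apply RInt_ext; intros; apply Rmult_comm. Qed.

Lemma RInt_plus_minus (f g h : R -> R) (a b : R) :
  (forall x, continuity_pt f x) -> (forall x, continuity_pt g x) ->
  (forall x, continuity_pt h x) ->
  RInt (fun x => f x + g x - h x) a b = RInt f a b + RInt g a b - RInt h a b.
Proof.
  intros Hf Hg Hh.
  rewrite (RInt_minus (V := R_CompleteNormedModule) (fun x => f x + g x) h),
    (RInt_plus (V := R_CompleteNormedModule) f g); try easy.
  all: apply ex_RInt_continuity_pt; auto.
  intros x; now apply continuity_pt_plus.
Qed.

(** * Polynomials on a cell *)

Definition cell_slope (k : nat) (c : dgfun) (j : nat) (x : R) : R :=
  sum_f_R0 (fun i => c j i * (INR i * x ^ pred i)) k.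

Lemma is_derive_cell_eval (k : nat) (c : dgfun) (j : nat) (x : R) :
  is_derive (fun y => cell_eval k c j y) x (cell_slope k c j x).
Proof.
  apply (is_derive_sum_f_R0 (fun i y => c j i * y ^ i)); intros i _.
  apply is_derive_scal.
  auto_derive; [easy | ring].
Qed.

Lemma Derive_cell_eval (k : nat) (c : dgfun) (j : nat) (x : R) :
  Derive (fun y => cell_eval k c j y) x = cell_slope k c j x.
Proof. apply is_derive_unique, is_derive_cell_eval. Qed.

Lemma continuity_pt_cell_eval (k : nat) (c : dgfun) (j : nat) (x : R) :
  continuity_pt (fun y => cell_eval k c j y) x.
Proof. eapply is_derive_continuity_pt, is_derive_cell_eval. Qed.

Lemma continuity_pt_Derive_cell_eval (k : nat) (c : dgfun) (j : nat) (x : R) :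
  continuity_pt (fun y => Derive (fun z => cell_eval k c j z) y) x.
Proof.
  apply continuity_pt_ext with (cell_slope k c j).
  { intros y; symmetry; apply Derive_cell_eval. }
  apply (continuity_pt_finite_SF (fun i y => c j i * (INR i * y ^ pred i))); intros i _.
  apply continuity_pt_scal, continuity_pt_scal, derivable_continuous_pt, derivable_pt_pow.
Qed.

Lemma RInt_cell_by_parts (k : nat) (W U : dgfun) (j : nat) (a b : R) :
  RInt (fun x => cell_eval k W j x * Derive (fun y => cell_eval k U j y) x) a b
  + RInt (fun x => cell_eval k U j x * Derive (fun y => cell_eval k W j y) x) a b
  = cell_eval k W j b * cell_eval k U j b - cell_eval k W j a * cell_eval k U j a.
Proof.
  apply RInt_by_parts; intros x.
  1, 2: apply Derive_correct; eexists; apply is_derive_cell_eval.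
  all: apply continuity_pt_Derive_cell_eval.
Qed.

Lemma is_derive_cell_eval_coef (k : nat) (c : R -> dgfun) (dc : dgfun) (j : nat) (t x : R) :
  (forall i, (i <= k)%nat -> is_derive (fun s => c s j i) t (dc j i)) ->
  is_derive (fun s => cell_eval k (c s) j x) t (cell_eval k dc j x).
Proof.
  intros Hc; apply (is_derive_sum_f_R0 (fun i s => c s j i * x ^ i)); intros i Hi.
  apply is_derive_mult_const, Hc, Hi.
Qed.

Lemma continuity_2d_pt_cell_eval (k : nat) (c : R -> dgfun) (j : nat) (t x : R) :
  (forall i, (i <= k)%nat -> continuity_pt (fun s => c s j i) t) ->
  continuity_2d_pt (fun s y => cell_eval k (c s) j y) t x.
Proof.
  intros Hc; apply (continuity_2d_pt_sum_f_R0 (fun i s y => c s j i * y ^ i)); intros i Hi.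
  apply (continuity_2d_pt_mult (fun s _ => c s j i) (fun _ y => y ^ i)).
  - apply continuity_2d_pt_fst, Hc, Hi.
  - apply continuity_2d_pt_snd, derivable_continuous_pt, derivable_pt_pow.
Qed.

(** * Periodic sums over the mesh *)

Lemma sumN_ext (f g : nat -> R) (n : nat) :
  (forall j, (j < n)%nat -> f j = g j) -> sumN f n = sumN g n.
Proof.
  induction n as [|n IH]; intros Hfg; simpl; [easy |].
  rewrite IH, Hfg; auto; intros; apply Hfg; lia.
Qed.

Lemma sumN_minus (f g : nat -> R) (n : nat) :
  sumN (fun j => f j - g j) n = sumN f n - sumN g n.
Proof. induction n as [|n IH]; simpl; [ring | rewrite IH; ring]. Qed.

Lemma sumN_scal (c : R) (f : nat -> R) (n : nat) :
  sumN (fun j => c * f j) n = c * sumN f n.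
Proof. induction n as [|n IH]; simpl; [ring | rewrite IH; ring]. Qed.

Lemma sumN_recl (f : nat -> R) (n : nat) :
  sumN f (S n) = f O + sumN (fun j => f (S j)) n.
Proof.
  induction n as [|n IH]; [simpl; ring |].
  change (sumN f (S (S n))) with (sumN f (S n) + f (S n)); rewrite IH; simpl; ring.
Qed.

Lemma left_if_0 (n : nat) : left_if (S n) 0 = n.
Proof. unfold left_if; replace (0 + S n - 1)%nat with n by lia; apply Nat.mod_small; lia. Qed.

Lemma left_if_S (n j : nat) : (j < n)%nat -> left_if (S n) (S j) = j.
Proof.
  intros Hj; unfold left_if.
  replace (S j + S n - 1)%nat with (j + 1 * S n)%nat by lia.
  rewrite Nat.Div0.mod_add; apply Nat.mod_small; lia.
Qed.

Lemma left_if_lt (N j : nat) : (1 <= N)%nat -> (left_if N j < N)%nat.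
Proof. intros HN; apply Nat.mod_upper_bound; lia. Qed.

Lemma succ_left_if_mod (N j : nat) : (j < N)%nat -> (S (left_if N j) mod N = j)%nat.
Proof.
  intros Hj; destruct N as [|n]; [lia |]; destruct j as [|j].
  - rewrite left_if_0; apply Nat.Div0.mod_same.
  - rewrite left_if_S by lia; apply Nat.mod_small; lia.
Qed.

Lemma sumN_left_if (g : nat -> R) (N : nat) :
  (1 <= N)%nat -> sumN (fun j => g (left_if N j)) N = sumN g N.
Proof.
  intros HN; destruct N as [|n]; [lia |].
  rewrite sumN_recl, left_if_0, (sumN_ext _ g) by (intros; now rewrite left_if_S).
  simpl; ring.
Qed.

Lemma sumN_periodic_balance (N : nat) (Fminus Fplus J : nat -> R) :
  (1 <= N)%nat -> (forall m, (m < N)%nat -> Fplus m - Fminus m = J m) ->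
  sumN (fun j => Fminus j - Fplus (left_if N j)) N + sumN J N = 0.
Proof.
  intros HN HJ.
  rewrite sumN_minus, sumN_left_if by exact HN.
  rewrite <- (sumN_ext _ _ _ HJ), sumN_minus; ring.
Qed.

Lemma vplus_left_if (k N : nat) (xs : nat -> R) (c : dgfun) (j : nat) :
  (j < N)%nat -> vplus k N xs c (left_if N j) = cell_eval k c j (xs j).
Proof. intros Hj; unfold vplus; now rewrite succ_left_if_mod. Qed.

Lemma is_derive_sumN (f : R -> nat -> R) (df : nat -> R) (t : R) (n : nat) :
  (forall j, (j < n)%nat -> is_derive (fun s => f s j) t (df j)) ->
  is_derive (fun s => sumN (f s) n) t (sumN df n).
Proof.
  induction n as [|n IH]; intros Hf; simpl.
  - apply (is_derive_const 0 t).
  - apply is_derive_Rplus.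
    + apply IH; intros; apply Hf; lia.
    + apply Hf; lia.
Qed.

(** * Energy identity for the scheme *)

Definition dt_coef (c : R -> dgfun) (t : R) : dgfun :=
  fun j i => Derive (fun s => c s j i) t.

Section C1Family.

Variables (k N : nat) (xs : nat -> R) (T0 T1 : R) (c : R -> dgfun).
Hypothesis HN : (1 <= N)%nat.
Hypothesis Hc : C1_Vh k N T0 T1 c.

Lemma is_derive_cell_eval_dt (j : nat) (t x : R) :
  (j < N)%nat -> T0 < t < T1 ->
  is_derive (fun s => cell_eval k (c s) j x) t (cell_eval k (dt_coef c t) j x).
Proof.
  intros Hj Ht; apply is_derive_cell_eval_coef; intros i Hi.
  apply Derive_correct, (Hc j i Hj Hi t Ht).
Qed.

Lemma Derive_cell_eval_dt (j : nat) (t x : R) :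
  (j < N)%nat -> T0 < t < T1 ->
  Derive (fun s => cell_eval k (c s) j x) t = cell_eval k (dt_coef c t) j x.
Proof. intros; now apply is_derive_unique, is_derive_cell_eval_dt. Qed.

Lemma continuity_2d_pt_cell_eval_C1 (j : nat) (t x : R) :
  (j < N)%nat -> T0 < t < T1 ->
  continuity_2d_pt (fun s y => cell_eval k (c s) j y) t x.
Proof.
  intros Hj Ht; apply continuity_2d_pt_cell_eval; intros i Hi.
  apply continuity_pt_filterlim, (ex_derive_continuous (fun s => c s j i)), (Hc j i Hj Hi t Ht).
Qed.

Lemma continuity_2d_pt_cell_eval_dt (j : nat) (t x : R) :
  (j < N)%nat -> T0 < t < T1 ->
  continuity_2d_pt (fun s y => cell_eval k (dt_coef c s) j y) t x.
Proof.
  intros Hj Ht; apply (continuity_2d_pt_cell_eval k (dt_coef c)); intros i Hi.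
  apply continuity_pt_filterlim, (Hc j i Hj Hi t Ht).
Qed.

Lemma is_derive_vminus (m : nat) (t : R) :
  (m < N)%nat -> T0 < t < T1 ->
  is_derive (fun s => vminus k xs (c s) m) t (vminus k xs (dt_coef c t) m).
Proof. apply is_derive_cell_eval_dt. Qed.

Lemma is_derive_vplus (m : nat) (t : R) :
  T0 < t < T1 ->
  is_derive (fun s => vplus k N xs (c s) m) t (vplus k N xs (dt_coef c t) m).
Proof. apply is_derive_cell_eval_dt, Nat.mod_upper_bound; lia. Qed.

Lemma is_derive_jump (m : nat) (t : R) :
  (m < N)%nat -> T0 < t < T1 ->
  is_derive (fun s => jump k N xs (c s) m) t (jump k N xs (dt_coef c t) m).
Proof.
  intros Hm Ht; apply is_derive_Rminus.
  - now apply is_derive_vplus.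
  - now apply is_derive_vminus.
Qed.

Lemma Derive_jump (m : nat) (t : R) :
  (m < N)%nat -> T0 < t < T1 ->
  Derive (fun s => jump k N xs (c s) m) t = jump k N xs (dt_coef c t) m.
Proof. intros; now apply is_derive_unique, is_derive_jump. Qed.

Lemma is_derive_avg (m : nat) (t : R) :
  (m < N)%nat -> T0 < t < T1 ->
  is_derive (fun s => avg k N xs (c s) m) t (avg k N xs (dt_coef c t) m).
Proof.
  intros Hm Ht; apply is_derive_scal.
  apply is_derive_Rplus.
  - now apply is_derive_vplus.
  - now apply is_derive_vminus.
Qed.

Lemma RInt_Derive_cell_eval_dt (j : nat) (t : R) (g : R -> R) (a b : R) :
  (j < N)%nat -> T0 < t < T1 ->
  RInt (fun x => Derive (fun s => cell_eval k (c s) j x) t * g x) a b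
  = RInt (fun x => cell_eval k (dt_coef c t) j x * g x) a b.
Proof. intros Hj Ht; apply RInt_ext; intros x _; now rewrite Derive_cell_eval_dt. Qed.

Lemma is_derive_RInt_cell_eval_mult (j : nat) (t : R) (g : R -> R) (a b : R) :
  (j < N)%nat -> T0 < t < T1 -> (forall x, continuity_pt g x) ->
  is_derive (fun s => RInt (fun x => cell_eval k (c s) j x * g x) a b) t
    (RInt (fun x => cell_eval k (dt_coef c t) j x * g x) a b).
Proof.
  intros Hj Ht Hg.
  apply (is_derive_RInt_param_interval (fun s x => cell_eval k (c s) j x * g x)
           (fun s x => cell_eval k (dt_coef c s) j x * g x) a b T0 T1); [exact Ht | | |].
  - intros s x Hs; apply is_derive_mult_const, is_derive_cell_eval_dt; auto.
  - intros s x _; apply continuity_pt_mult; [apply continuity_pt_cell_eval | apply Hg].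
  - intros x; apply continuity_2d_pt_mult.
    + apply continuity_2d_pt_cell_eval_dt; auto.
    + apply continuity_2d_pt_snd, Hg.
Qed.

End C1Family.

Lemma smooth_ex_derive (V : R -> R) (x : R) : smooth V -> ex_derive V x.
Proof. intros HV; exact (HV 1%nat x). Qed.

Lemma smooth_continuity_pt_Derive (V : R -> R) (x : R) :
  smooth V -> continuity_pt (Derive V) x.
Proof.
  intros HV; apply continuity_pt_filterlim, (ex_derive_continuous (Derive V)), (HV 2%nat x).
Qed.

Section Scheme.

Variables (V : R -> R) (a11 a13 a33 b : R) (k N : nat) (xs : nat -> R) (T0 T1 : R).
Variables (u v w : R -> dgfun).
Hypothesis HV : smooth V.
Hypothesis HN : (1 <= N)%nat.
Hypotheses (Hu : C1_Vh k N T0 T1 u) (Hv : C1_Vh k N T0 T1 v) (Hw : C1_Vh k N T0 T1 w).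

Definition cell_energy (t : R) (j : nat) : R :=
  RInt (fun x => / 2 * ((cell_eval k (v t) j x) ^ 2 + (cell_eval k (w t) j x) ^ 2)
                 - V (cell_eval k (u t) j x)) (xs j) (xs (S j)).

Definition cell_energy_rate (t : R) (j : nat) : R :=
  RInt (fun x => cell_eval k (v t) j x * cell_eval k (dt_coef v t) j x
                 + cell_eval k (w t) j x * cell_eval k (dt_coef w t) j x
                 - Derive V (cell_eval k (u t) j x) * cell_eval k (dt_coef u t) j x)
       (xs j) (xs (S j)).

Definition jump_energy (t : R) (m : nat) : R :=
  a11 * (jump k N xs (u t) m) ^ 2 - a33 * (jump k N xs (w t) m) ^ 2.

Definition jump_energy_rate (t : R) (m : nat) : R :=
  a11 * jump k N xs (u t) m * jump k N xs (dt_coef u t) m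
  - a33 * jump k N xs (w t) m * jump k N xs (dt_coef w t) m.

Lemma is_derive_cell_energy (t : R) (j : nat) :
  T0 < t < T1 -> (j < N)%nat ->
  is_derive (fun s => cell_energy s j) t (cell_energy_rate t j).
Proof.
  intros Ht Hj; unfold cell_energy, cell_energy_rate.
  apply (is_derive_RInt_param_interval
    (fun s x => / 2 * ((cell_eval k (v s) j x) ^ 2 + (cell_eval k (w s) j x) ^ 2)
                - V (cell_eval k (u s) j x))
    (fun s x => cell_eval k (v s) j x * cell_eval k (dt_coef v s) j x
                + cell_eval k (w s) j x * cell_eval k (dt_coef w s) j x
                - Derive V (cell_eval k (u s) j x) * cell_eval k (dt_coef u s) j x)
    _ _ T0 T1); [exact Ht | | |].
  - intros s x Hs.
    apply (is_derive_energy_density V (fun s => cell_eval k (v s) j x)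
             (fun s => cell_eval k (w s) j x) (fun s => cell_eval k (u s) j x));
      [apply smooth_ex_derive, HV | apply (is_derive_cell_eval_dt k N T0 T1); auto ..].
  - intros s x Hs; eapply is_derive_continuity_pt.
    apply (is_derive_energy_density V (fun y => cell_eval k (v s) j y)
             (fun y => cell_eval k (w s) j y) (fun y => cell_eval k (u s) j y));
      [apply smooth_ex_derive, HV | apply is_derive_cell_eval ..].
  - intros x.
    pose proof (fun c Hc => continuity_2d_pt_cell_eval_C1 k N T0 T1 c Hc j t x Hj Ht).
    pose proof (fun c Hc => continuity_2d_pt_cell_eval_dt k N T0 T1 c Hc j t x Hj Ht).
    apply continuity_2d_pt_minus; [apply continuity_2d_pt_plus |];
      apply continuity_2d_pt_mult; auto.
    apply (continuity_1d_2d_pt_comp (Derive V) (fun s y => cell_eval k (u s) j y));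
      [apply smooth_continuity_pt_Derive, HV | auto].
Qed.

Lemma is_derive_jump_energy (t : R) (m : nat) :
  T0 < t < T1 -> (m < N)%nat ->
  is_derive (fun s => jump_energy s m) t (2 * jump_energy_rate t m).
Proof.
  intros Ht Hm.
  apply (is_derive_weighted_squares a11 a33 (fun s => jump k N xs (u s) m)
           (fun s => jump k N xs (w s) m)); apply (is_derive_jump k N xs T0 T1); auto.
Qed.

Lemma is_derive_energy (t : R) :
  T0 < t < T1 ->
  is_derive (energy k N xs V a11 a33 u v w) t
    (sumN (cell_energy_rate t) N + sumN (jump_energy_rate t) N).
Proof.
  intros Ht.
  change (energy k N xs V a11 a33 u v w)
    with (fun s => sumN (cell_energy s) N + / 2 * sumN (jump_energy s) N).
  replace (sumN (jump_energy_rate t) N)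
    with (/ 2 * sumN (fun m => 2 * jump_energy_rate t m) N) by (rewrite sumN_scal; field).
  apply is_derive_Rplus.
  - apply (is_derive_sumN cell_energy); intros j Hj; now apply is_derive_cell_energy.
  - apply is_derive_scal, (is_derive_sumN jump_energy); intros m Hm.
    now apply is_derive_jump_energy.
Qed.

(* [u_hat] is linear in [(u, w)], so feeding it the constant families
   [∂t u(t)], [∂t w(t)] yields [∂t û]. *)
Definition u_hat_dt (t : R) (m : nat) : R :=
  u_hat k N xs a13 a33 (fun _ => dt_coef u t) (fun _ => dt_coef w t) t m.

Lemma is_derive_u_hat (t : R) (m : nat) :
  T0 < t < T1 -> (m < N)%nat ->
  is_derive (fun s => u_hat k N xs a13 a33 u w s m) t (u_hat_dt t m).
Proof.
  intros Ht Hm; unfold u_hat, u_hat_dt.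
  apply is_derive_Rminus.
  - apply is_derive_Rminus.
    + apply (is_derive_avg k N xs T0 T1); auto.
    + apply is_derive_scal, (is_derive_jump k N xs T0 T1); auto.
  - apply is_derive_scal, (is_derive_jump k N xs T0 T1); auto.
Qed.

Hypothesis scheme_eq3 :
  forall t, T0 < t < T1 -> forall j, (j < N)%nat -> forall phi3 : dgfun,
     RInt (fun x => cell_eval k (u t) j x
                    * Derive (fun y => cell_eval k phi3 j y) x) (xs j) (xs (S j))
     - u_hat k N xs a13 a33 u w t j * cell_eval k phi3 j (xs (S j))
     + u_hat k N xs a13 a33 u w t (left_if N j) * cell_eval k phi3 j (xs j)
     = - RInt (fun x => cell_eval k (w t) j x * cell_eval k phi3 j x)
              (xs j) (xs (S j)).

Lemma scheme_eq3_dt (phi : dgfun) (t : R) (j : nat) :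
  T0 < t < T1 -> (j < N)%nat ->
  RInt (fun x => cell_eval k (dt_coef u t) j x
                 * Derive (fun y => cell_eval k phi j y) x) (xs j) (xs (S j))
  - u_hat_dt t j * cell_eval k phi j (xs (S j))
  + u_hat_dt t (left_if N j) * cell_eval k phi j (xs j)
  + RInt (fun x => cell_eval k (dt_coef w t) j x * cell_eval k phi j x) (xs j) (xs (S j))
  = 0.
Proof.
  intros Ht Hj.
  assert (Hl : (left_if N j < N)%nat) by now apply left_if_lt.
  apply (is_derive_vanishing (fun s =>
    RInt (fun x => cell_eval k (u s) j x
                   * Derive (fun y => cell_eval k phi j y) x) (xs j) (xs (S j))
    - u_hat k N xs a13 a33 u w s j * cell_eval k phi j (xs (S j))
    + u_hat k N xs a13 a33 u w s (left_if N j) * cell_eval k phi j (xs j)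
    + RInt (fun x => cell_eval k (w s) j x * cell_eval k phi j x) (xs j) (xs (S j)))
    T0 T1 t); [intros s Hs; rewrite scheme_eq3 by assumption; ring | exact Ht |].
  apply is_derive_Rplus; [apply is_derive_Rplus; [apply is_derive_Rminus |] |].
  - apply (is_derive_RInt_cell_eval_mult k N T0 T1); auto.
    apply continuity_pt_Derive_cell_eval.
  - apply is_derive_mult_const, is_derive_u_hat; auto.
  - apply is_derive_mult_const, is_derive_u_hat; auto.
  - apply (is_derive_RInt_cell_eval_mult k N T0 T1); auto.
    apply continuity_pt_cell_eval.
Qed.

Hypothesis scheme_eq1 :
  forall t, T0 < t < T1 -> forall j, (j < N)%nat -> forall phi1 : dgfun,
     - RInt (fun x => Derive (fun s => cell_eval k (v s) j x) t
                      * cell_eval k phi1 j x) (xs j) (xs (S j))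
     - RInt (fun x => cell_eval k (w t) j x
                      * Derive (fun y => cell_eval k phi1 j y) x) (xs j) (xs (S j))
     + w_hat k N xs a11 a13 b u v w t j * cell_eval k phi1 j (xs (S j))
     - w_hat k N xs a11 a13 b u v w t (left_if N j) * cell_eval k phi1 j (xs j)
     = - RInt (fun x => Derive V (cell_eval k (u t) j x)
                        * cell_eval k phi1 j x) (xs j) (xs (S j)).

Hypothesis scheme_eq2 :
  forall t, T0 < t < T1 -> forall j, (j < N)%nat -> forall phi2 : dgfun,
     RInt (fun x => Derive (fun s => cell_eval k (u s) j x) t
                    * cell_eval k phi2 j x) (xs j) (xs (S j))
     + v_hat k N xs b u t j * cell_eval k phi2 j (xs (S j))
     - v_hat k N xs b u t (left_if N j) * cell_eval k phi2 j (xs j)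
     = RInt (fun x => cell_eval k (v t) j x * cell_eval k phi2 j x)
            (xs j) (xs (S j)).

(* Boundary terms at interface [m] produced by the test functions
   [(∂t u, ∂t v, w)], read with the one-sided trace [vminus k xs] or [vplus k N xs]. *)
Definition interface_flux (trace : dgfun -> nat -> R) (t : R) (m : nat) : R :=
  v_hat k N xs b u t m * trace (dt_coef v t) m
  + u_hat_dt t m * trace (w t) m
  + w_hat k N xs a11 a13 b u v w t m * trace (dt_coef u t) m
  - trace (w t) m * trace (dt_coef u t) m.

Lemma cell_energy_rate_flux (t : R) (j : nat) :
  T0 < t < T1 -> (j < N)%nat ->
  cell_energy_rate t j
  = interface_flux (vminus k xs) t j - interface_flux (vplus k N xs) t (left_if N j).
Proof.
  intros Ht Hj.
  pose proof (scheme_eq1 t Ht j Hj (dt_coef u t)) as eq1.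
  pose proof (scheme_eq2 t Ht j Hj (dt_coef v t)) as eq2.
  pose proof (scheme_eq3_dt (w t) t j Ht Hj) as eq3.
  pose proof (RInt_cell_by_parts k (w t) (dt_coef u t) j (xs j) (xs (S j))) as parts.
  rewrite (RInt_Derive_cell_eval_dt k N T0 T1 v), RInt_mult_comm in eq1 by assumption.
  rewrite (RInt_Derive_cell_eval_dt k N T0 T1 u) in eq2 by assumption.
  rewrite (RInt_mult_comm (fun x => cell_eval k (dt_coef w t) j x)) in eq3.
  unfold cell_energy_rate, interface_flux, vminus.
  rewrite !vplus_left_if by exact Hj.
  rewrite RInt_plus_minus; [lra | ..].
  1, 2: intros x; apply continuity_pt_mult; apply continuity_pt_cell_eval.
  intros x; apply continuity_pt_mult; [| apply continuity_pt_cell_eval].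
  apply (continuity_pt_comp (fun y => cell_eval k (u t) j y));
    [apply continuity_pt_cell_eval | apply smooth_continuity_pt_Derive, HV].
Qed.

Lemma interface_flux_jump (t : R) (m : nat) :
  T0 < t < T1 -> (m < N)%nat ->
  interface_flux (vplus k N xs) t m - interface_flux (vminus k xs) t m = jump_energy_rate t m.
Proof.
  intros Ht Hm.
  unfold interface_flux, jump_energy_rate, u_hat_dt, u_hat, v_hat, w_hat.
  rewrite (Derive_jump k N xs T0 T1 u), (Derive_jump k N xs T0 T1 v) by assumption.
  unfold avg, jump; field.
Qed.

Lemma is_derive_energy_zero (t : R) :
  T0 < t < T1 -> is_derive (energy k N xs V a11 a33 u v w) t 0.
Proof.
  intros Ht.
  assert (Hbalance : sumN (cell_energy_rate t) N + sumN (jump_energy_rate t) N = 0).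
  { rewrite (sumN_ext _ _ _ (fun j Hj => cell_energy_rate_flux t j Ht Hj)).
    apply sumN_periodic_balance; [exact HN |].
    intros m Hm; now apply interface_flux_jump. }
  rewrite <- Hbalance; now apply is_derive_energy.
Qed.

End Scheme.

Theorem proposition4p1
  (V : R -> R) (a11 a13 a33 b : R) (k N : nat) (xs : nat -> R)
  (T0 T1 : R) (u v w : R -> dgfun) :
  smooth V ->
  (1 <= N)%nat ->
  (forall j, (j < N)%nat -> xs j < xs (S j)) ->
  C1_Vh k N T0 T1 u -> C1_Vh k N T0 T1 v -> C1_Vh k N T0 T1 w ->
  (forall t, T0 < t < T1 -> forall j, (j < N)%nat -> forall phi1 : dgfun,
     - RInt (fun x => Derive (fun s => cell_eval k (v s) j x) t
                      * cell_eval k phi1 j x) (xs j) (xs (S j))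
     - RInt (fun x => cell_eval k (w t) j x
                      * Derive (fun y => cell_eval k phi1 j y) x) (xs j) (xs (S j))
     + w_hat k N xs a11 a13 b u v w t j * cell_eval k phi1 j (xs (S j))
     - w_hat k N xs a11 a13 b u v w t (left_if N j) * cell_eval k phi1 j (xs j)
     = - RInt (fun x => Derive V (cell_eval k (u t) j x)
                        * cell_eval k phi1 j x) (xs j) (xs (S j))) ->
  (forall t, T0 < t < T1 -> forall j, (j < N)%nat -> forall phi2 : dgfun,
     RInt (fun x => Derive (fun s => cell_eval k (u s) j x) t
                    * cell_eval k phi2 j x) (xs j) (xs (S j))
     + v_hat k N xs b u t j * cell_eval k phi2 j (xs (S j))
     - v_hat k N xs b u t (left_if N j) * cell_eval k phi2 j (xs j)
     = RInt (fun x => cell_eval k (v t) j x * cell_eval k phi2 j x)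
            (xs j) (xs (S j))) ->
  (forall t, T0 < t < T1 -> forall j, (j < N)%nat -> forall phi3 : dgfun,
     RInt (fun x => cell_eval k (u t) j x
                    * Derive (fun y => cell_eval k phi3 j y) x) (xs j) (xs (S j))
     - u_hat k N xs a13 a33 u w t j * cell_eval k phi3 j (xs (S j))
     + u_hat k N xs a13 a33 u w t (left_if N j) * cell_eval k phi3 j (xs j)
     = - RInt (fun x => cell_eval k (w t) j x * cell_eval k phi3 j x)
              (xs j) (xs (S j))) ->
  forall t1 t2, T0 < t1 < T1 -> T0 < t2 < T1 ->
    energy k N xs V a11 a33 u v w t1 = energy k N xs V a11 a33 u v w t2.
Proof.
  (* RInt is oriented. *)
  intros HV HN _ Hu Hv Hw E1 E2 E3 t1 t2 Ht1 Ht2.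
  apply (is_derive_zero_interval_const _ T0 T1); [| exact Ht1 | exact Ht2].
  intros t Ht; now apply (is_derive_energy_zero V a11 a13 a33 b k N xs T0 T1).
Qed.
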